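(* Let $X_1,\dots,X_n$ be independent random variables with $X_i\sim\mathrm{Bernoulli}(p_i)$, $p_i\in[0,1)$, let $S_n=\sum_{i=1}^n X_i$ and suppose $\lambda=E(S_n)=\sum_{i=1}^n p_i>0$. Then $$D(P_{S_n}\,\|\,\mathrm{Po}(\lambda))\le \frac{1}{\lambda}\sum_{i=1}^n\frac{p_i^3}{1-p_i}.$$
   Context: $P_{S_n}$ is the distribution of $S_n$; $\mathrm{Po}(\lambda)$ is the Poisson distribution with mean $\lambda$. $D(P\|Q)=\sum_x P(x)\log\frac{P(x)}{Q(x)}$ is the relative entropy (natural logarithm, with conventions $0\log(0/a)=0$, $a\log(a/0)=\infty$ for $a>0$). *)

From HB Require Import structures.
From mathcomp Require Import all_boot all_order all_algebra.
From mathcomp Require Import all_classical all_reals all_analysis.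
Set Implicit Arguments. Unset Strict Implicit. Unset Printing Implicit Defensive.
Import Order.TTheory GRing.Theory Num.Theory.
Local Open Scope ring_scope.

(* Distribution of S_n = X_1 + ... + X_n, where X_i ~ Bernoulli(p i) are
   independent: realised on the canonical product space {0,1}^n
   (outcomes x : {ffun 'I_n -> bool}, X_i(x) = x i) with the product
   probability  P{x} = prod_i (p i if x i else 1 - p i). *)
Definition dist_Sn (R : realType) (n : nat) (p : 'I_n -> R) (k : nat) : R :=
  \sum_(x : {ffun 'I_n -> bool} | (\sum_(i < n) (x i : nat))%N == k)
     \prod_(i < n) (if x i then p i else 1 - p i).

(* Po(lam): we use the library's poisson_pmf (poisson_distribution.v),
   equal to lam^k/k! * exp(-lam) when lam > 0. *)

Definition rel_ent_term (R : realType) (P Q : nat -> R) (k : nat) : \bar R :=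
  if P k == 0 then 0%E
  else if Q k == 0 then +oo%E
  else (P k * ln (P k / Q k))%:E.

Definition rel_ent (R : realType) (P Q : nat -> R) : \bar R :=
  limn (fun N => (\sum_(k < N) rel_ent_term P Q k)%E).

From HB Require Import structures.
From mathcomp Require Import all_boot all_order all_algebra.
From mathcomp Require Import all_classical all_reals all_analysis.
From mathcomp Require Import ring lra.
Import Order.TTheory GRing.Theory Num.Theory.
Import numFieldNormedType.Exports.
Local Open Scope classical_set_scope.
Local Open Scope ring_scope.

(* Let P be the law of S_n, l = sum_i p_i and f = P / Po(l). The relative
   entropy D(P || Po(l)) is the entropy of f under Po(l), which the modified
   log-Sobolev inequality for the Poisson law (Bobkov-Ledoux) bounds by
   l E_Po[(f(k+1) - f(k))^2 / f(k)] = l^-1 sum_k ((k+1) P(k+1) - l P(k))^2 / P(k).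
   The Poisson inequality is the limit of its binomial analogue, which follows
   by tensorisation from a two-point inequality. The last sum is bounded by
   sum_i p_i^3 / (1 - p_i) by adding one Bernoulli variable at a time: the new
   score is a convex combination of two shifted old scores, and x^2 / y is
   jointly convex. *)

Local Notation xlnx := (fun x => x * ln x).

Section RealInequalities.
Context {R : realType}.

Lemma mulr_div_id (x y : R) : (y = 0 -> x = 0) -> y * (x / y) = x.
Proof.
move=> h; case: (eqVneq y 0) => [y0|yne]; first by rewrite (h y0) y0 mul0r.
by rewrite mulrC divfK.
Qed.

Lemma mulr_div_sqr (x y : R) : y * (x / y) ^+ 2 = x ^+ 2 / y.
Proof.
case: (eqVneq y 0) => [->|yne]; first by rewrite invr0 !mulr0 mul0r.
by field.
Qed.

Lemma convex_comb_eq0 (p a b : R) : 0 < p < 1 -> 0 <= a -> 0 <= b ->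
  (1 - p) * a + p * b = 0 -> a = 0 /\ b = 0.
Proof.
move=> /andP[p0 p1] a0 b0 /eqP.
have q0 : 0 < 1 - p by rewrite subr_gt0.
rewrite paddr_eq0 ?mulr_ge0 ?(ltW q0) ?(ltW p0) // => /andP[].
by rewrite !mulf_eq0 (gt_eqF q0) (gt_eqF p0) /= => /eqP -> /eqP ->.
Qed.

Lemma ln_le_subr1 (x : R) : 0 < x -> ln x <= x - 1.
Proof. by move=> x0; have := @le_ln1Dx R (x - 1); rewrite [1 + _]addrC subrK; apply; lra. Qed.

Lemma sqr_wmean_le (w1 w2 s1 s2 : R) : 0 <= w1 -> 0 <= w2 ->
  (w1 * s1 + w2 * s2) ^+ 2 / (w1 + w2) <= w1 * s1 ^+ 2 + w2 * s2 ^+ 2.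
Proof.
move=> w10 w20.
have rhs0 : 0 <= w1 * s1 ^+ 2 + w2 * s2 ^+ 2 by rewrite addr_ge0 // mulr_ge0 // sqr_ge0.
have [->|wne] := eqVneq (w1 + w2) 0; first by rewrite invr0 mulr0.
have w0 : 0 < w1 + w2 by rewrite lt_def wne addr_ge0.
rewrite ler_pdivrMr //.
have := mulr_ge0 (mulr_ge0 w10 w20) (sqr_ge0 (s1 - s2)); nra.
Qed.

Lemma sqr_div_convex (p x1 y1 x2 y2 : R) : 0 <= p <= 1 -> 0 <= y1 -> 0 <= y2 ->
  (y1 = 0 -> x1 = 0) -> (y2 = 0 -> x2 = 0) ->
  ((1 - p) * x1 + p * x2) ^+ 2 / ((1 - p) * y1 + p * y2)
   <= (1 - p) * (x1 ^+ 2 / y1) + p * (x2 ^+ 2 / y2).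
Proof.
move=> /andP[p0 p1] y10 y20 h1 h2.
have q0 : 0 <= 1 - p by rewrite subr_ge0.
have := @sqr_wmean_le ((1 - p) * y1) (p * y2) (x1 / y1) (x2 / y2) (mulr_ge0 q0 y10) (mulr_ge0 p0 y20).
by rewrite -!(mulrA (1 - p) y1) -!(mulrA p y2) !mulr_div_id // !mulr_div_sqr.
Qed.

Lemma xlnx_two_point (p a b : R) : 0 <= p <= 1 -> 0 <= a -> 0 <= b ->
  (1 - p) * xlnx a + p * xlnx b - xlnx ((1 - p) * a + p * b)
   <= p * (1 - p) * ((b - a) ^+ 2 / ((1 - p) * a + p * b)).
Proof.
move=> /andP[p0 p1] a0 b0.
have q0 : 0 <= 1 - p by rewrite subr_ge0.
set m := (1 - p) * a + p * b.
have [m0|mne] := eqVneq m 0.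
  have [h1 h2] : (1 - p) * a = 0 /\ p * b = 0.
    by move: m0 => /eqP; rewrite paddr_eq0 ?mulr_ge0 // => /andP[/eqP -> /eqP ->].
  by rewrite m0 invr0 !mulr0 mul0r subr0 !mulrA h1 h2 !mul0r addr0.
have mpos : 0 < m by rewrite lt_def mne addr_ge0 // mulr_ge0.
have ln_le x : 0 <= x -> x * ln x - x * ln m <= x * (x / m - 1).
  move=> x0; have [->|xne] := eqVneq x 0; first by rewrite !mul0r subr0.
  have xpos : 0 < x by rewrite lt_def xne x0.
  rewrite -mulrBr; apply: ler_wpM2l => //; rewrite -ln_div ?posrE //.
  exact/ln_le_subr1/divr_gt0.
have -> : p * (1 - p) * ((b - a) ^+ 2 / m) =
    (1 - p) * (a * (a / m - 1)) + p * (b * (b / m - 1)) by rewrite /m; field.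
have -> : (1 - p) * (a * ln a) + p * (b * ln b) - m * ln m =
    (1 - p) * (a * ln a - a * ln m) + p * (b * ln b - b * ln m) by rewrite /m; ring.
by apply: lerD; apply: ler_wpM2l => //; exact: ln_le.
Qed.

End RealInequalities.

Section BinomialMLSI.
Context {R : realType}.
Implicit Types (p : R) (F G f : nat -> R).

Lemma binomial_pmfE M p k :
  binomial_pmf M p k = 'C(M, k)%:R * p ^+ k * (1 - p) ^+ (M - k).
Proof. by rewrite /binomial_pmf -mulr_natl mulrA. Qed.

Lemma binomial_pmf_out M p k : (M < k)%N -> binomial_pmf M p k = 0.
Proof. by move=> Mk; rewrite binomial_pmfE bin_small // !mul0r. Qed.

Lemma binomial_pmfS0 M p : binomial_pmf M.+1 p 0 = (1 - p) * binomial_pmf M p 0.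
Proof. by rewrite !binomial_pmfE !bin0 !subn0 exprS; ring. Qed.

Lemma binomial_pmfSS M p k :
  binomial_pmf M.+1 p k.+1 = p * binomial_pmf M p k + (1 - p) * binomial_pmf M p k.+1.
Proof.
rewrite !binomial_pmfE binS natrD subSS; have [kM|Mk] := ltnP k M.
  by rewrite -(subnSK kM) !exprS; ring.
rewrite bin_small ?ltnS // (_ : M - k = 0)%N; last by apply/eqP; rewrite subn_eq0.
by rewrite (_ : M - k.+1 = 0)%N ?expr0 ?exprS; [ring | apply/eqP; rewrite subn_eq0 ltnW].
Qed.

Definition binomial_expect M p F : R := \sum_(k < M.+1) binomial_pmf M p k * F k.

Lemma binomial_expect0 p F : binomial_expect 0 p F = F 0%N.
Proof. by rewrite /binomial_expect big_ord1 binomial_pmfE bin0 !expr0 !mul1r. Qed.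

Lemma binomial_expectS M p F :
  binomial_expect M.+1 p F = binomial_expect M p (fun t => (1 - p) * F t + p * F t.+1).
Proof.
rewrite /binomial_expect big_ord_recl /= binomial_pmfS0.
under eq_bigr do rewrite /bump /= binomial_pmfSS.
have shift : \sum_(i < M.+1) binomial_pmf M p i.+1 * F i.+1 =
    \sum_(i < M) binomial_pmf M p i.+1 * F i.+1.
  by rewrite big_ord_recr /= binomial_pmf_out // mul0r addr0.
have split_l : \sum_(i < M.+1) (p * binomial_pmf M p i + (1 - p) * binomial_pmf M p i.+1) * F i.+1
    = p * \sum_(i < M.+1) binomial_pmf M p i * F i.+1
      + (1 - p) * \sum_(i < M.+1) binomial_pmf M p i.+1 * F i.+1.
  by rewrite !mulr_sumr -big_split /=; apply: eq_bigr => i _; ring.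
have split_r : \sum_(i < M.+1) binomial_pmf M p i * ((1 - p) * F i + p * F i.+1) =
    (1 - p) * \sum_(i < M.+1) binomial_pmf M p i * F i
    + p * \sum_(i < M.+1) binomial_pmf M p i * F i.+1.
  by rewrite !mulr_sumr -big_split /=; apply: eq_bigr => i _; ring.
rewrite split_l split_r shift (big_ord_recl M (fun i => binomial_pmf M p i * F i)) /=.
ring.
Qed.

Lemma ler_binomial_expect M p F G : 0 <= p <= 1 -> (forall k, F k <= G k) ->
  binomial_expect M p F <= binomial_expect M p G.
Proof.
by move=> p01 FG; apply: ler_sum => i _; apply: ler_wpM2l; [exact: binomial_pmf_ge0|].
Qed.

Lemma binomial_expectB M p F G :
  binomial_expect M p (fun k => F k - G k) = binomial_expect M p F - binomial_expect M p G.
Proof. by rewrite /binomial_expect -sumrB; apply: eq_bigr => i _; rewrite mulrBr. Qed.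

Lemma binomial_expectZ M p a F :
  binomial_expect M p (fun k => a * F k) = a * binomial_expect M p F.
Proof. by rewrite /binomial_expect mulr_sumr; apply: eq_bigr => i _; rewrite mulrCA. Qed.

Definition sqdiff_mean_ratio p f t : R :=
  (f t.+1 - f t) ^+ 2 / ((1 - p) * f t + p * f t.+1).

Lemma sqdiff_mean_ratio_avg p f t : 0 < p < 1 -> (forall k, 0 <= f k) ->
  sqdiff_mean_ratio p (fun k => (1 - p) * f k + p * f k.+1) t
    <= (1 - p) * sqdiff_mean_ratio p f t + p * sqdiff_mean_ratio p f t.+1.
Proof.
move=> p01 f0; set g := fun k => _; have [p0 p1] := andP p01.
have g0 k : 0 <= g k by rewrite addr_ge0 // mulr_ge0 // ?subr_ge0 ltW.
have supp k : g k = 0 -> f k.+1 - f k = 0.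
  by move=> /(convex_comb_eq0 _ _ _ p01 (f0 _) (f0 _)) [-> ->]; rewrite subrr.
rewrite /sqdiff_mean_ratio.
have -> : g t.+1 - g t = (1 - p) * (f t.+1 - f t) + p * (f t.+2 - f t.+1) by rewrite /g; ring.
by apply: sqr_div_convex; [rewrite !ltW | exact: g0 | exact: g0 | exact: supp | exact: supp].
Qed.

(* Tensorisation: binomial_expectS peels off one trial, whose contribution is
   bounded by xlnx_two_point; sqdiff_mean_ratio_avg controls the remaining terms. *)
Lemma binomial_mlsi M p f : 0 < p < 1 -> (forall k, 0 <= f k) ->
  binomial_expect M p (fun k => xlnx (f k)) - xlnx (binomial_expect M p f)
   <= M%:R * (p * (1 - p)) * binomial_expect M.-1 p (sqdiff_mean_ratio p f).
Proof.
move=> p01; have [p0 p1] := andP p01.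
have p01w : 0 <= p <= 1 by rewrite !le_eqVlt p0 p1 !orbT.
have pq0 : 0 <= p * (1 - p) by apply: mulr_ge0; rewrite ?subr_ge0 ltW.
elim: M f => [|M IH] f f0; first by rewrite !binomial_expect0 subrr !mul0r.
set g := fun k => (1 - p) * f k + p * f k.+1.
have g0 k : 0 <= g k by rewrite addr_ge0 // mulr_ge0 // ?subr_ge0 ltW.
have -> : binomial_expect M.+1 p (fun k => xlnx (f k)) - xlnx (binomial_expect M.+1 p f) =
    binomial_expect M p (fun t => (1 - p) * xlnx (f t) + p * xlnx (f t.+1) - xlnx (g t))
    + (binomial_expect M p (fun t => xlnx (g t)) - xlnx (binomial_expect M p g)).
  by rewrite binomial_expectB !binomial_expectS; ring.
have two_point : binomial_expect M p
      (fun t => (1 - p) * xlnx (f t) + p * xlnx (f t.+1) - xlnx (g t))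
    <= p * (1 - p) * binomial_expect M p (sqdiff_mean_ratio p f).
  by rewrite -binomial_expectZ; apply: ler_binomial_expect => // k; exact: xlnx_two_point.
have smoothing : M%:R * (p * (1 - p)) * binomial_expect M.-1 p (sqdiff_mean_ratio p g)
    <= M%:R * (p * (1 - p)) * binomial_expect M p (sqdiff_mean_ratio p f).
  case: M {IH two_point} => [|M]; first by rewrite !mul0r.
  apply: ler_wpM2l; first by rewrite mulr_ge0.
  by rewrite binomial_expectS; apply: ler_binomial_expect => // t; exact: sqdiff_mean_ratio_avg.
have -> : M.+1%:R * (p * (1 - p)) * binomial_expect M p (sqdiff_mean_ratio p f) =
    p * (1 - p) * binomial_expect M p (sqdiff_mean_ratio p f)
    + M%:R * (p * (1 - p)) * binomial_expect M p (sqdiff_mean_ratio p f).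
  by rewrite -natr1; ring.
by apply: lerD => //; exact: le_trans (IH g g0) smoothing.
Qed.

End BinomialMLSI.

Section PoissonLimit.
Context {R : realType}.
Implicit Types (p : R) (F f : nat -> R).

Lemma poisson_pmf_gt0 (l : R) k : 0 < l -> 0 < poisson_pmf l k.
Proof.
by move=> l0; rewrite /poisson_pmf l0 !mulr_gt0 ?expR_gt0 ?exprn_gt0 ?invr_gt0 ?ltr0n ?fact_gt0.
Qed.

Lemma poisson_pmfS (l : R) k : 0 < l ->
  poisson_pmf l k.+1 = poisson_pmf l k * l / k.+1%:R.
Proof.
move=> l0; rewrite /poisson_pmf l0 factS natrM exprS.
by field; rewrite nat1r !pnatr_eq0 /= -lt0n fact_gt0.
Qed.

(* Success probability of the binomial law Bin(N.+1, l / N.+1) tending to Po(l). *)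
Definition poisson_approx_rate (l : R) N := l / N.+1%:R.

Lemma poisson_approx_rate_cvg0 (l : R) : poisson_approx_rate l @ \oo --> 0.
Proof. by rewrite -(mulr0 l); apply: cvgMl_tmp; exact: cvg_harmonic. Qed.

Lemma near_oo_natS_gt (l : R) : \forall N \near \oo, l < N.+1%:R.
Proof.
by apply: filterS (nbhs_infty_gtr l) => N /lt_le_trans; apply; rewrite ler_nat.
Qed.

Lemma poisson_approx_rate_in01 (l : R) N : 0 < l -> l < N.+1%:R ->
  0 < poisson_approx_rate l N < 1.
Proof. by move=> l0 lN; rewrite divr_gt0 //= ltr_pdivrMr // mul1r. Qed.

Lemma onem_poisson_approx_rate_cvg (l : R) : 0 < l ->
  (fun N => (1 - poisson_approx_rate l N) ^+ N.+1) @ \oo --> expR (- l).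
Proof.
move=> l0; set t := poisson_approx_rate l.
apply: (squeeze_cvgr (f := fun N => expR (- l / (1 - t N))) (h := fun=> expR (- l))).
- apply: filterS (near_oo_natS_gt l) => N lN.
  have /andP[t0 t1] : 0 < t N < 1 := poisson_approx_rate_in01 _ _ l0 lN.
  have q0 : 0 < 1 - t N by rewrite subr_gt0.
  have Nt : N.+1%:R * t N = l by rewrite /t mulrC divfK // pnatr_eq0.
  clearbody t.
  rewrite -[_ ^+ _]lnK ?posrE ?exprn_gt0 // lnXn // !ler_expR -mulr_natl -!Nt.
  have up : ln (1 - t N) <= - t N by have := ln_le_subr1 _ q0; lra.
  have down : - (t N / (1 - t N)) <= ln (1 - t N).
    have := ln_le_subr1 (1 - t N)^-1; rewrite invr_gt0 lnV ?posrE // => /(_ q0).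
    have -> : (1 - t N)^-1 - 1 = t N / (1 - t N) by field; rewrite gt_eqF.
    by rewrite lerNl.
  by rewrite mulNr -mulrA -!mulrN; apply/andP; split; apply: ler_wpM2l; rewrite ?ler0n ?mulrN.
- apply: continuous_cvg; first exact: continuous_expR.
  rewrite -[X in _ --> X](divr1 (- l)) -[X in _ / X](subr0 1).
  apply: cvgMl_tmp; apply: cvgV; first by rewrite subr0 oner_eq0.
  by apply: cvgB; [exact: cvg_cst | exact: poisson_approx_rate_cvg0].
- exact: cvg_cst.
Qed.

Lemma binomial_pmf_succ n (p : R) k : (k < n)%N -> p < 1 ->
  binomial_pmf n p k.+1 = binomial_pmf n p k * ((n%:R - k%:R) * p / (k.+1%:R * (1 - p))).
Proof.
move=> kn p1; have qn : 1 - p != 0 by rewrite subr_eq0 (gt_eqF p1).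
have binS : 'C(n, k.+1)%:R = (n%:R - k%:R) * 'C(n, k)%:R / k.+1%:R :> R.
  have := congr1 (fun x => x%:R : R) (mul_bin_left n k).
  by rewrite !natrM natrB ?(ltnW kn) // => <-; field; rewrite nat1r pnatr_eq0.
rewrite !binomial_pmfE binS -(subnSK kn) !exprS; field.
by rewrite qn nat1r pnatr_eq0.
Qed.

Lemma binomial_pmf_pred N (p : R) k : (k <= N)%N -> p < 1 ->
  binomial_pmf N p k = binomial_pmf N.+1 p k * ((N.+1%:R - k%:R) / (N.+1%:R * (1 - p))).
Proof.
move=> kN p1; have qn : 1 - p != 0 by rewrite subr_eq0 (gt_eqF p1).
have binP : 'C(N, k)%:R = (N.+1%:R - k%:R) * 'C(N.+1, k)%:R / N.+1%:R :> R.
  have := congr1 (fun x => x%:R : R) (mul_bin_down N.+1 k).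
  by rewrite !natrM natrB ?(leqW kN) //= => <-; field; rewrite nat1r pnatr_eq0.
rewrite !binomial_pmfE binP (subSn kN) !exprS; field.
by rewrite qn nat1r pnatr_eq0.
Qed.

Lemma binomial_pmf_cvg_poisson (l : R) k : 0 < l ->
  (fun N => binomial_pmf N.+1 (poisson_approx_rate l N) k) @ \oo --> poisson_pmf l k.
Proof.
move=> l0; set t := poisson_approx_rate l; elim: k => [|k IH].
  rewrite /poisson_pmf l0 expr0 fact0 invr1 !mul1r.
  under eq_cvg do rewrite binomial_pmfE bin0 subn0 expr0 !mul1r.
  exact: onem_poisson_approx_rate_cvg.
have -> : poisson_pmf l k.+1 = poisson_pmf l k * ((l - k%:R * 0) / (k.+1%:R * (1 - 0))).
  by rewrite poisson_pmfS // mulr0 !subr0 mulr1 mulrA.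
have ratio : (fun N => (l - k%:R * t N) / (k.+1%:R * (1 - t N))) @ \oo -->
    (l - k%:R * 0) / (k.+1%:R * (1 - 0)).
  apply: cvgM; first by apply: cvgB; [exact: cvg_cst | apply: cvgMl_tmp; exact: poisson_approx_rate_cvg0].
  apply: cvgV; first by rewrite subr0 mulr1 pnatr_eq0.
  by apply: cvgMl_tmp; apply: cvgB; [exact: cvg_cst | exact: poisson_approx_rate_cvg0].
apply: cvg_trans (cvgM IH ratio); apply: near_eq_cvg.
apply: filterS2 (nbhs_infty_ge k) (near_oo_natS_gt l) => N kN lN.
have /andP[_ t1] : 0 < t N < 1 := poisson_approx_rate_in01 _ _ l0 lN.
rewrite binomial_pmf_succ // mulrBl.
by rewrite /t /poisson_approx_rate /= [N.+1%:R * _]mulrC divfK // pnatr_eq0.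
Qed.

Lemma binomial_pmf_pred_cvg_poisson (l : R) k : 0 < l ->
  (fun N => binomial_pmf N (poisson_approx_rate l N) k) @ \oo --> poisson_pmf l k.
Proof.
move=> l0; set t := poisson_approx_rate l.
have ratio : (fun N => (1 - k%:R * poisson_approx_rate 1 N) / (1 - t N)) @ \oo -->
    ((1 - k%:R * 0) / (1 - 0) : R).
  apply: cvgM; first by apply: cvgB; [exact: cvg_cst | apply: cvgMl_tmp; exact: poisson_approx_rate_cvg0].
  apply: cvgV; first by rewrite subr0 oner_eq0.
  by apply: cvgB; [exact: cvg_cst | exact: poisson_approx_rate_cvg0].
rewrite mulr0 !subr0 divr1 in ratio.
rewrite -[poisson_pmf l k]mulr1.
apply: cvg_trans (cvgM (binomial_pmf_cvg_poisson _ k l0) ratio); apply: near_eq_cvg.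
apply: filterS2 (nbhs_infty_ge k) (near_oo_natS_gt l) => N kN lN.
have /andP[_ t1] : 0 < t N < 1 := poisson_approx_rate_in01 _ _ l0 lN.
rewrite (binomial_pmf_pred _ _ _ kN t1) /t /poisson_approx_rate /=; congr (_ * _).
by field; rewrite nat1r pnatr_eq0 /= subr_eq0 gt_eqF.
Qed.

Lemma cvg_sum_ord n (F : nat -> 'I_n -> R) (L : 'I_n -> R) :
  (forall k, (fun N => F N k) @ \oo --> L k) ->
  (fun N => \sum_(k < n) F N k) @ \oo --> \sum_(k < n) L k.
Proof. by move=> FL; apply: cvg_big => [|k _]; [exact: add_continuous | exact: FL]. Qed.

Lemma big_ord_tail0 (G : nat -> R) a b : (a <= b)%N ->
  (forall k, (a <= k)%N -> G k = 0) -> \sum_(k < b) G k = \sum_(k < a) G k.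
Proof.
move=> ab G0; rewrite -!(big_mkord xpredT) (big_cat_nat (leq0n a) ab) /=.
rewrite [X in _ + X](_ : _ = 0) ?addr0 //.
by rewrite big_nat_cond big1 // => i /andP[/andP[/G0]].
Qed.

Lemma binomial_expect_trunc M p F n : (forall k, (n < k)%N -> F k = 0) ->
  binomial_expect M p F = \sum_(k < n.+1) binomial_pmf M p k * F k.
Proof.
move=> F0; rewrite /binomial_expect.
transitivity (\sum_(k < (M + n).+1) binomial_pmf M p k * F k).
  symmetry; apply: (big_ord_tail0 (fun k => binomial_pmf M p k * F k)).
    by rewrite ltnS leq_addr.
  by move=> k /binomial_pmf_out ->; rewrite mul0r.
apply: (big_ord_tail0 (fun k => binomial_pmf M p k * F k)); first by rewrite ltnS leq_addl.
by move=> k /F0 ->; rewrite mulr0.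
Qed.

Lemma sqdiff_mean_ratio_cvg (l : R) f t : 0 <= f t -> (f t = 0 -> f t.+1 = 0) ->
  (fun N => sqdiff_mean_ratio (poisson_approx_rate l N) f t) @ \oo
    --> (f t.+1 - f t) ^+ 2 / f t.
Proof.
move=> ft0 supp; have [z|nz] := eqVneq (f t) 0.
  under eq_cvg do rewrite /sqdiff_mean_ratio z (supp z) !mulr0 addr0 invr0 !mulr0.
  by rewrite z invr0 mulr0; exact: cvg_cst.
have mean : (fun N => (1 - poisson_approx_rate l N) * f t + poisson_approx_rate l N * f t.+1)
    @ \oo --> (1 - 0) * f t + 0 * f t.+1.
  apply: cvgD; apply: cvgMr_tmp; last exact: poisson_approx_rate_cvg0.
  by apply: cvgB; [exact: cvg_cst | exact: poisson_approx_rate_cvg0].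
rewrite subr0 mul1r mul0r addr0 in mean.
by rewrite /sqdiff_mean_ratio; apply: cvgMl_tmp; exact: cvgV nz mean.
Qed.

(* Bobkov-Ledoux inequality for finitely supported densities f, obtained as the
   limit of binomial_mlsi along Bin(N.+1, l / N.+1) -> Po(l). *)
Lemma poisson_mlsi (l : R) f n : 0 < l -> (forall k, 0 <= f k) ->
  (forall k, (n < k)%N -> f k = 0) -> (forall t, f t = 0 -> f t.+1 = 0) ->
  \sum_(k < n.+1) poisson_pmf l k * f k = 1 ->
  \sum_(k < n.+1) poisson_pmf l k * xlnx (f k)
    <= l * \sum_(t < n.+1) poisson_pmf l t * ((f t.+1 - f t) ^+ 2 / f t).
Proof.
move=> l0 f0 fn supp f1; set t := poisson_approx_rate l.
have mean_cvg (F : nat -> R) : (fun N => \sum_(k < n.+1) binomial_pmf N.+1 (t N) k * F k)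
    @ \oo --> \sum_(k < n.+1) poisson_pmf l k * F k.
  by apply: cvg_sum_ord => k; apply: cvgMr_tmp; exact: binomial_pmf_cvg_poisson.
have lhs : (fun N => \sum_(k < n.+1) binomial_pmf N.+1 (t N) k * xlnx (f k)
      - xlnx (\sum_(k < n.+1) binomial_pmf N.+1 (t N) k * f k)) @ \oo
    --> \sum_(k < n.+1) poisson_pmf l k * xlnx (f k) - xlnx 1.
  apply: cvgB; first exact: (mean_cvg (fun k => xlnx (f k))).
  apply: cvgM; first by rewrite -f1; exact: mean_cvg.
  by apply: continuous_cvg; [exact: continuous_ln | rewrite -f1; exact: mean_cvg].
have rhs : (fun N => l * (1 - t N)
      * \sum_(k < n.+1) binomial_pmf N (t N) k * sqdiff_mean_ratio (t N) f k) @ \oo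
    --> l * (1 - 0) * \sum_(k < n.+1) poisson_pmf l k * ((f k.+1 - f k) ^+ 2 / f k).
  apply: cvgM; first by apply: cvgMl_tmp; apply: cvgB; [exact: cvg_cst | exact: poisson_approx_rate_cvg0].
  apply: cvg_sum_ord => k; apply: cvgM; first exact: binomial_pmf_pred_cvg_poisson.
  by apply: sqdiff_mean_ratio_cvg; [exact: f0 | exact: supp].
rewrite ln1 mulr0 subr0 in lhs; rewrite subr0 mulr1 in rhs.
apply: ler_cvg_to lhs rhs _; apply: filterS (near_oo_natS_gt l) => N lN.
have xlnx_fn k : (n < k)%N -> xlnx (f k) = 0 by move=> /fn ->; rewrite mul0r.
have ratio_fn k : (n < k)%N -> sqdiff_mean_ratio (t N) f k = 0.
  by move=> nk; rewrite /sqdiff_mean_ratio (fn _ nk) (fn _ (leqW nk)) subrr expr0n /= mul0r.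
rewrite -!(binomial_expect_trunc _ _ _ _ xlnx_fn) -!(binomial_expect_trunc _ _ _ _ fn).
rewrite -(binomial_expect_trunc _ _ _ _ ratio_fn).
have -> : l = N.+1%:R * t N by rewrite /t /poisson_approx_rate mulrC divfK // pnatr_eq0.
rewrite -(mulrA N.+1%:R); exact: binomial_mlsi (poisson_approx_rate_in01 _ _ l0 lN) f0.
Qed.

End PoissonLimit.

Section BernoulliSum.
Context {R : realType}.
Implicit Types (s : seq R) (P : nat -> R).

Fixpoint bernoulli_sum_pmf s k : R :=
  if s is a :: s' then
    (1 - a) * bernoulli_sum_pmf s' k + a * (if k is k'.+1 then bernoulli_sum_pmf s' k' else 0)
  else (k == 0)%:R.

Lemma bernoulli_sum_pmf_ge0 s k : all (fun a => 0 <= a <= 1) s -> 0 <= bernoulli_sum_pmf s k.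
Proof.
elim: s k => [|a s IH] [|k] //= /andP[/andP[a0 a1] s01].
  by rewrite mulr0 addr0 mulr_ge0 ?subr_ge0 ?IH.
by rewrite addr_ge0 ?mulr_ge0 ?subr_ge0 ?IH.
Qed.

Lemma bernoulli_sum_pmf_out s k : (size s < k)%N -> bernoulli_sum_pmf s k = 0.
Proof.
elim: s k => [|a s IH] [|k] //= sk.
by rewrite !IH ?mulr0 ?addr0 // (ltn_trans _ sk).
Qed.

Lemma bernoulli_sum_pmf_eq0S s k : all (fun a => 0 <= a < 1) s ->
  bernoulli_sum_pmf s k = 0 -> bernoulli_sum_pmf s k.+1 = 0.
Proof.
have ge0 s' k' : all (fun a => 0 <= a < 1) s' -> 0 <= bernoulli_sum_pmf s' k'.
  by move=> s01; apply: bernoulli_sum_pmf_ge0; apply: sub_all s01 => a /andP[-> /ltW].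
elim: s k => [|a s IH] k /=; first by case: k.
case/andP => /andP[a0 a1] s01 /eqP.
have q0 : 0 < 1 - a by rewrite subr_gt0.
rewrite paddr_eq0; last first.
- by rewrite mulr_ge0 //; case: k => // k; exact: ge0.
- by apply: mulr_ge0; [exact: ltW | exact: ge0].
by case/andP; rewrite mulf_eq0 (gt_eqF q0) => /eqP Pk _; rewrite IH // Pk !mulr0 addr0.
Qed.

Lemma sum_mix_shift m a (X Y : nat -> R) : X m.+1 = 0 ->
  \sum_(k < m.+2) ((1 - a) * X k + a * (if (k : nat) is k'.+1 then Y k' else 0)) =
  (1 - a) * \sum_(k < m.+1) X k + a * \sum_(k < m.+1) Y k.
Proof.
move=> Xm; rewrite big_split /= -!mulr_sumr.
rewrite [\sum_(k < m.+2) X k]big_ord_recr /= Xm addr0.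
by rewrite [\sum_(k < m.+2) _]big_ord_recl /= add0r.
Qed.

Lemma sum_bernoulli_sum_pmf s : \sum_(k < (size s).+1) bernoulli_sum_pmf s k = 1.
Proof.
elim: s => [|a s IH] /=; first by rewrite big_ord1.
by rewrite sum_mix_shift ?bernoulli_sum_pmf_out // IH; ring.
Qed.

Definition poisson_score P (l : R) k : R := k.+1%:R * P k.+1 - l * P k.

(* l times the scaled Fisher information of a law P supported on {0, ..., m} *)
Definition fisher_sum P (l : R) m : R := \sum_(k < m.+1) poisson_score P l k ^+ 2 / P k.

Lemma poisson_score_cons a s l k :
  poisson_score (bernoulli_sum_pmf (a :: s)) (a + l) k =
  (1 - a) * poisson_score (bernoulli_sum_pmf s) l k
  + a * (if k is k'.+1 then poisson_score (bernoulli_sum_pmf s) l k' else 0)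
  + a ^+ 2 * bernoulli_sum_pmf s k
  - a ^+ 2 * (if k is k'.+1 then bernoulli_sum_pmf s k' else 0).
Proof. by case: k => [|k]; rewrite /poisson_score /=; [ring | rewrite -[k.+2%:R]natr1; ring]. Qed.

(* One Bernoulli(a) step of the Fisher bound: split the new score by
   convexity of (x, y) |-> x^2 / y with shifts a^2 / (1 - a) and -a. *)
Lemma score_mix_le (a Pz Az Pz' Az' : R) : 0 <= a < 1 -> 0 <= Pz -> 0 <= Pz' ->
  (Pz = 0 -> Az = 0) -> (Pz' = 0 -> Az' = 0) ->
  ((1 - a) * Az + a * Az' + a ^+ 2 * Pz - a ^+ 2 * Pz') ^+ 2 / ((1 - a) * Pz + a * Pz')
  <= (1 - a) * (Pz * (Az / Pz + a ^+ 2 / (1 - a)) ^+ 2) + a * (Pz' * (Az' / Pz' - a) ^+ 2).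
Proof.
move=> /andP[a0 a1] Pz0 Pz0' AzP AzP'.
have qn : 1 - a != 0 by rewrite subr_eq0 (gt_eqF a1).
have -> : (1 - a) * Az + a * Az' + a ^+ 2 * Pz - a ^+ 2 * Pz' =
    ((1 - a) * Pz) * (Az / Pz + a ^+ 2 / (1 - a)) + (a * Pz') * (Az' / Pz' - a).
  have [z|zn] := eqVneq Pz 0.
    rewrite (AzP z) z !(invr0, mul0r, mulr0, add0r, addr0).
    have [z'|zn'] := eqVneq Pz' 0; last by field; rewrite ?qn ?zn'.
    by rewrite (AzP' z') z' !(invr0, mul0r, mulr0, addr0, subrr) ?oppr0.
  have [z'|zn'] := eqVneq Pz' 0; last by field; rewrite ?qn ?zn ?zn'.
  by rewrite (AzP' z') z' !(invr0, mul0r, mulr0, addr0, subr0); field; rewrite ?qn ?zn.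
have -> : (1 - a) * (Pz * (Az / Pz + a ^+ 2 / (1 - a)) ^+ 2) + a * (Pz' * (Az' / Pz' - a) ^+ 2)
    = ((1 - a) * Pz) * (Az / Pz + a ^+ 2 / (1 - a)) ^+ 2 + (a * Pz') * (Az' / Pz' - a) ^+ 2.
  by ring.
by apply: sqr_wmean_le; rewrite mulr_ge0 // subr_ge0 ltW.
Qed.

Lemma sum_sqr_shift (P A : nat -> R) c m : (forall k, P k = 0 -> A k = 0) ->
  \sum_(k < m) P k * (A k / P k + c) ^+ 2 =
  \sum_(k < m) A k ^+ 2 / P k + 2 * c * \sum_(k < m) A k + c ^+ 2 * \sum_(k < m) P k.
Proof.
move=> AP; rewrite !mulr_sumr -!big_split /=; apply: eq_bigr => k _.
have -> : P k * (A k / P k + c) ^+ 2 =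
    P k * (A k / P k) ^+ 2 + 2 * c * (P k * (A k / P k)) + c ^+ 2 * P k by ring.
by rewrite mulr_div_sqr mulr_div_id //; exact: AP.
Qed.

Lemma fisher_sum_bernoulli_sum_le s : all (fun a => 0 <= a < 1) s ->
  fisher_sum (bernoulli_sum_pmf s) (\sum_(a <- s) a) (size s)
    <= \sum_(a <- s) a ^+ 3 / (1 - a).
Proof.
elim: s => [|a s IH].
  by rewrite /fisher_sum big_ord1 /poisson_score !big_nil /= mulr0 mul0r subr0 expr0n /= mul0r.
case/andP => /andP[a0 a1] s01; have qn : 1 - a != 0 by rewrite subr_eq0 (gt_eqF a1).
rewrite !big_cons /fisher_sum /=.
set P := bernoulli_sum_pmf s; set l := \sum_(b <- s) b; set m := size s.
set A := poisson_score P l; set c := a ^+ 2 / (1 - a).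
have P0 k : 0 <= P k.
  by apply: bernoulli_sum_pmf_ge0; apply: sub_all s01 => b /andP[-> /ltW].
have AP k : P k = 0 -> A k = 0.
  by move=> Pk; rewrite /A /poisson_score Pk (bernoulli_sum_pmf_eq0S _ _ s01 Pk : P k.+1 = 0) !mulr0 subrr.
have step : \sum_(k < m.+2)
      poisson_score (bernoulli_sum_pmf (a :: s)) (a + l) k ^+ 2 / bernoulli_sum_pmf (a :: s) k
    <= \sum_(k < m.+2) ((1 - a) * (P k * (A k / P k + c) ^+ 2)
         + a * (if (k : nat) is k'.+1 then P k' * (A k' / P k' + - a) ^+ 2 else 0)).
  apply: ler_sum => -[[|k] km] _; rewrite poisson_score_cons /=.
    have := @score_mix_le a (P 0%N) (A 0%N) 0 0.
    by rewrite !mul0r !mulr0 !addr0 !subr0; apply; rewrite ?a0 ?a1 ?lexx //; exact: AP.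
  by apply: score_mix_le; rewrite ?a0 ?a1 //; exact: AP.
apply: le_trans step _.
rewrite (sum_mix_shift m a (fun k => P k * (A k / P k + c) ^+ 2)
  (fun k => P k * (A k / P k + - a) ^+ 2)) /=; last by rewrite /P bernoulli_sum_pmf_out // !mul0r.
rewrite !sum_sqr_shift // sum_bernoulli_sum_pmf.
set J := \sum_(k < m.+1) A k ^+ 2 / P k; set S := \sum_(k < m.+1) A k.
have -> : (1 - a) * (J + 2 * c * S + c ^+ 2 * 1) + a * (J + 2 * - a * S + (- a) ^+ 2 * 1)
    = a ^+ 3 / (1 - a) + J by rewrite /c; field.
by rewrite lerD2l; exact: IH.
Qed.

End BernoulliSum.

Lemma bernoulli_sum_pmf_coef {R : realType} (s : seq R) k :
  bernoulli_sum_pmf s k = (\prod_(a <- s) ((1 - a)%:P + a *: 'X))`_k.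
Proof.
elim: s k => [|a s IH] k; first by rewrite big_nil coef1.
rewrite big_cons mulrDl coefD coefCM -scalerAl coefZ coefXM /=.
by case: k => [|k] /=; rewrite !IH.
Qed.

(* Expanding the product of the generating polynomials (1 - p i) + p i X
   sums the product weights over the outcomes with exactly k successes. *)
Lemma dist_Sn_coef {R : realType} n (p : 'I_n -> R) k :
  dist_Sn p k = (\prod_(i < n) ((1 - p i)%:P + p i *: 'X))`_k.
Proof.
have -> : \prod_(i < n) ((1 - p i)%:P + p i *: 'X) =
    \prod_(i < n) \sum_(b : bool) ((if b then p i else 1 - p i) *: 'X^b).
  by apply: eq_bigr => i _; rewrite big_bool /= expr1 expr0 addrC -alg_polyC.
rewrite bigA_distr_bigA /= coef_sum /dist_Sn.
rewrite [RHS](bigID (fun x : {ffun 'I_n -> bool} => (\sum_(i < n) (x i : nat))%N == k)) /=.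
rewrite [X in _ = _ + X]big1 ?addr0 => [|x /negbTE xk]; last first.
  by rewrite scaler_prod -expr_sum coefZ coefXn eq_sym xk mulr0.
apply: eq_bigr => x /eqP xk; rewrite scaler_prod -expr_sum coefZ coefXn xk eqxx mulr1.
by apply: eq_bigr => i _; case: (x i).
Qed.

Lemma dist_Sn_bernoulli_sum {R : realType} n (p : 'I_n -> R) k :
  dist_Sn p k = bernoulli_sum_pmf [seq p i | i <- enum 'I_n] k.
Proof. by rewrite dist_Sn_coef bernoulli_sum_pmf_coef big_map big_enum. Qed.

Lemma rel_ent_finite {R : realType} (P Q : nat -> R) n :
  (forall k, (n < k)%N -> P k = 0) -> (forall k, Q k != 0) ->
  rel_ent P Q = (\sum_(k < n.+1) P k * ln (P k / Q k))%:E.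
Proof.
move=> P0 Q0; have term k : rel_ent_term P Q k = (P k * ln (P k / Q k))%:E.
  by rewrite /rel_ent_term (negbTE (Q0 k)); case: eqP => [->|_]; rewrite ?mul0r.
apply: lim_near_cst => //; apply: filterS (nbhs_infty_ge n.+1) => N nN.
under eq_bigr do rewrite term.
rewrite sumEFin; congr (_%:E).
by apply: (big_ord_tail0 (fun k => P k * ln (P k / Q k))) => // k /P0 ->; rewrite mul0r.
Qed.

Lemma poisson_density_energy {R : realType} (l : R) (P : nat -> R) t :
  0 < l -> (P t = 0 -> P t.+1 = 0) ->
  l * (poisson_pmf l t * ((P t.+1 / poisson_pmf l t.+1 - P t / poisson_pmf l t) ^+ 2
                          / (P t / poisson_pmf l t)))
  = l^-1 * (poisson_score P l t ^+ 2 / P t).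
Proof.
move=> l0 supp; have Po0 k : poisson_pmf l k != 0 by rewrite gt_eqF // poisson_pmf_gt0.
rewrite /poisson_score poisson_pmfS //; have [z|nz] := eqVneq (P t) 0.
  by rewrite z (supp z) !(mul0r, mulr0, subrr, invr0, expr0n) /=.
by field; rewrite ?nz ?Po0 ?gt_eqF ?nat1r ?pnatr_eq0.
Qed.

Lemma rel_ent_poisson_le_fisher {R : realType} (P : nat -> R) (l : R) n : 0 < l ->
  (forall k, 0 <= P k) -> (forall k, (n < k)%N -> P k = 0) ->
  (forall k, P k = 0 -> P k.+1 = 0) -> \sum_(k < n.+1) P k = 1 ->
  (rel_ent P (poisson_pmf l) <= (l^-1 * fisher_sum P l n)%:E)%E.
Proof.
move=> l0 P0 P_out P_supp P1; set Po := poisson_pmf l.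
have Po_gt0 k : 0 < Po k := poisson_pmf_gt0 l k l0.
pose f k := P k / Po k.
have f0 k : 0 <= f k by rewrite divr_ge0 // ltW.
have f_out k : (n < k)%N -> f k = 0 by move=> /P_out; rewrite /f => ->; rewrite mul0r.
have f_supp k : f k = 0 -> f k.+1 = 0.
  rewrite /f => /eqP; rewrite mulf_eq0 invr_eq0 (gt_eqF (Po_gt0 k)) orbF.
  by move=> /eqP /P_supp ->; rewrite mul0r.
have f1 : \sum_(k < n.+1) Po k * f k = 1.
  by rewrite -P1; apply: eq_bigr => k _; rewrite /f mulrC divfK ?gt_eqF.
rewrite (rel_ent_finite _ _ _ P_out) => [|k]; last by rewrite gt_eqF.
rewrite lee_fin; have := poisson_mlsi _ _ _ l0 f0 f_out f_supp f1.
have -> : \sum_(k < n.+1) Po k * xlnx (f k) = \sum_(k < n.+1) P k * ln (P k / Po k).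
  by apply: eq_bigr => k _; rewrite /f mulrA (mulrC (Po k)) divfK ?gt_eqF.
rewrite /f /Po mulr_sumr.
by rewrite (eq_bigr _ (fun (k : 'I_n.+1) _ => poisson_density_energy _ _ k l0 (P_supp k))) -mulr_sumr.
Qed.

Theorem theorem1 (R : realType) (n : nat) (p : 'I_n -> R)
  (hp : forall i, 0 <= p i /\ p i < 1)
  (hlam : 0 < \sum_(i < n) p i) :
  (rel_ent (dist_Sn p) (poisson_pmf (\sum_(i < n) p i))
   <= ((\sum_(i < n) p i)^-1 * \sum_(i < n) p i ^+ 3 / (1 - p i))%:E)%E.
Proof.
set s := [seq p i | i <- enum 'I_n].
have s01 : all (fun a => 0 <= a < 1) s.
  by rewrite all_map; apply/allP => i _ /=; case: (hp i) => -> ->.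
have size_s : size s = n by rewrite size_map size_enum_ord.
have sum_s : \sum_(a <- s) a = \sum_(i < n) p i by rewrite big_map big_enum.
have -> : dist_Sn p = bernoulli_sum_pmf s by apply: funext => k; exact: dist_Sn_bernoulli_sum.
apply: le_trans (@rel_ent_poisson_le_fisher _ _ _ n hlam _ _ _ _) _.
- move=> k; apply: bernoulli_sum_pmf_ge0.
  by apply: sub_all s01 => a /andP[-> /ltW].
- by rewrite -size_s; exact: bernoulli_sum_pmf_out.
- by move=> k; exact: bernoulli_sum_pmf_eq0S.
- by rewrite -size_s sum_bernoulli_sum_pmf.
rewrite lee_fin; apply: ler_wpM2l; first by rewrite invr_ge0 ltW.
by have := fisher_sum_bernoulli_sum_le _ s01; rewrite sum_s size_s big_map big_enum.
Qed.
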